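(* Let $a\in\mathbb{R}$, $b\in(a,\infty)$, $h\in\mathbb{N}$, $v_1,\dots,v_h,w_1,\dots,w_h\in(0,\infty)$, let $f,p\in C(\mathbb{R},\mathbb{R})$ satisfy for all $x\in\mathbb{R}$ that $p(x)\ge0$ and $p^{-1}((0,\infty))=(a,b)$, with $\mathcal{L}$, $I_i^\theta$, $\operatorname{Lip}$ as in the context. Assume $\operatorname{Lip}(f)<\min_{i\in\{1,\dots,h\}}v_iw_i$, let $\theta\in\mathbb{R}^{h+1}$ satisfy $(\nabla\mathcal{L})(\theta)=0$, and let $i,j\in\{1,\dots,h\}$ satisfy $I_i^\theta\cap I_j^\theta\neq\emptyset$. Then $I_i^\theta\subseteq I_j^\theta$ or $I_j^\theta\subseteq I_i^\theta$.
   Context: Let $\mathfrak{c}(x)=\min\{\max\{x,0\},1\}$. For $F\in C(\mathbb{R},\mathbb{R})$ let $\operatorname{Lip}(F)=\sup_{x,y\in[a,b],x\ne y}\frac{|F(x)-F(y)|}{|x-y|}$. For $\theta=(\theta_1,\dots,\theta_{h+1})\in\mathbb{R}^{h+1}$ and $i\in\{1,\dots,h\}$ let $\psi_i(\theta)=-[w_i]^{-1}\theta_i$, $I_i^\theta=(\psi_i(\theta),\psi_i(\theta)+[w_i]^{-1})\cap(a,b)$, $\mathcal{N}^\theta(x)=\theta_{h+1}+\sum_{i=1}^hv_i\mathfrak{c}(w_ix+\theta_i)$, and $\mathcal{L}(\theta)=\int_a^b(\mathcal{N}^\theta(x)-f(x))^2p(x)\,\mathrm{d}x$ ($\mathcal{L}$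 is continuously differentiable). *)

From Stdlib Require Import Reals Lra.
From Coquelicot Require Import Coquelicot.
Open Scope R_scope.

Definition clip (x : R) : R := Rmin (Rmax x 0) 1.

Fixpoint sumR (n : nat) (g : nat -> R) : R :=
  match n with
  | O => 0
  | S m => sumR m g + g (S m)
  end.

Definition Lip (a b : R) (F : R -> R) : Rbar :=
  Lub_Rbar (fun r => exists x y, a <= x <= b /\ a <= y <= b /\ x <> y /\
                        r = Rabs (F x - F y) / Rabs (x - y)).

(* parameter vectors theta in R^{h+1} are represented as nat -> R,
   using indices 1..h+1 *)
Definition psi (w : nat -> R) (theta : nat -> R) (i : nat) : R :=
  - / (w i) * theta i.

Definition Iint (a b : R) (w : nat -> R) (theta : nat -> R) (i : nat) (x : R) : Prop :=
  psi w theta i < x < psi w theta i + / (w i) /\ a < x < b.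

Definition NN (h : nat) (v w : nat -> R) (theta : nat -> R) (x : R) : R :=
  theta (S h) + sumR h (fun i => v i * clip (w i * x + theta i)).

Definition Loss (a b : R) (h : nat) (v w : nat -> R) (f p : R -> R)
  (theta : nat -> R) : R :=
  RInt (fun x => (NN h v w theta x - f x) ^ 2 * p x) a b.

Definition shift (theta : nat -> R) (k : nat) (t : R) : nat -> R :=
  fun m => if Nat.eqb m k then theta m + t else theta m.

From Stdlib Require Import Reals Lra Lia.
From Coquelicot Require Import Coquelicot.
Open Scope R_scope.

(* Put g = N^theta - f.  On the closure of I_k the k-th unit is in its linear
   regime, so N^theta has slope at least v_k w_k > Lip(f) there and g is
   strictly increasing.  Perturbing only the bias theta_k changes the loss by
   2 v_k t \int_{I_k} g p + O(t^2) for t > 0, so a vanishing partial derivative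
   forces \int_{I_k} g p = 0; an increasing g with zero p-weighted mean on an
   interval is negative at its left end and positive at its right end.  If
   I_i = (a_i, b_i) and I_j = (a_j, b_j) crossed, a_i < a_j < b_i < b_j, then
   g < g(a_j) < 0 on (a_i, a_j) and g > g(b_i) > 0 on (b_i, b_j); hence
   \int_{a_j}^{b_i} g p = - \int_{a_i}^{a_j} g p > 0 and so \int_{a_j}^{b_j} g p > 0,
   a contradiction. *)

Lemma clip_le_compat x y : x <= y -> clip x <= clip y.
Proof. unfold clip, Rmin, Rmax; repeat destruct Rle_dec; lra. Qed.

Lemma clip_nonpos x : x <= 0 -> clip x = 0.
Proof. unfold clip, Rmin, Rmax; repeat destruct Rle_dec; lra. Qed.

Lemma clip_ge1 x : 1 <= x -> clip x = 1.
Proof. unfold clip, Rmin, Rmax; repeat destruct Rle_dec; lra. Qed.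

Lemma clip_unit x : 0 <= x <= 1 -> clip x = x.
Proof. unfold clip, Rmin, Rmax; repeat destruct Rle_dec; lra. Qed.

Lemma clip_lipschitz x y : Rabs (clip x - clip y) <= Rabs (x - y).
Proof.
  unfold clip, Rmin, Rmax; repeat destruct Rle_dec; unfold Rabs;
    repeat destruct Rcase_abs; lra.
Qed.

Lemma continuous_clip (x : R) : continuous clip x.
Proof.
  apply continuity_pt_filterlim. intros eps Heps. exists eps. split; [exact Heps|].
  intros y [_ Hy]. simpl in *. unfold R_dist in *.
  eapply Rle_lt_trans; [apply clip_lipschitz | exact Hy].
Qed.

Definition clip_increment (u t : R) : R := clip (u + t) - clip u.

Lemma clip_increment_bounds u t : 0 <= t -> 0 <= clip_increment u t <= t.
Proof. unfold clip_increment, clip, Rmin, Rmax; repeat destruct Rle_dec; lra. Qed.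

Lemma clip_increment_0 u : clip_increment u 0 = 0.
Proof. unfold clip_increment. rewrite Rplus_0_r. ring. Qed.

Lemma sumR_ext n (A B : nat -> R) :
  (forall m, (1 <= m <= n)%nat -> A m = B m) -> sumR n A = sumR n B.
Proof.
  induction n as [|n IH]; intros H; simpl; [reflexivity|].
  rewrite IH, (H (S n)); [reflexivity | lia | intros; apply H; lia].
Qed.

Lemma sumR_update n (A B : nat -> R) k : (1 <= k <= n)%nat ->
  (forall m, m <> k -> A m = B m) -> sumR n A = sumR n B + (A k - B k).
Proof.
  induction n as [|n IH]; intros Hk H; [lia|]. simpl.
  destruct (Nat.eq_dec k (S n)) as [->|Hne].
  - rewrite (sumR_ext n A B); [ring|]. intros m Hm. apply H. lia.
  - rewrite IH, (H (S n)); [ring | lia | lia | exact H].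
Qed.

Lemma sumR_le_compat n (A B : nat -> R) :
  (forall m, (1 <= m <= n)%nat -> B m <= A m) -> sumR n B <= sumR n A.
Proof.
  induction n as [|n IH]; intros H; simpl; [lra|].
  apply Rplus_le_compat; [apply IH; intros; apply H | apply H]; lia.
Qed.

Lemma sumR_sub_ge_term n (A B : nat -> R) k :
  (forall m, (1 <= m <= n)%nat -> B m <= A m) -> (1 <= k <= n)%nat ->
  A k - B k <= sumR n A - sumR n B.
Proof.
  induction n as [|n IH]; intros H Hk; [lia|]. simpl.
  assert (HSn : B (S n) <= A (S n)) by (apply H; lia).
  destruct (Nat.eq_dec k (S n)) as [->|Hne].
  - assert (sumR n B <= sumR n A) by (apply sumR_le_compat; intros; apply H; lia). lra.
  - assert (A k - B k <= sumR n A - sumR n B) by (apply IH; [intros; apply H|]; lia). lra.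
Qed.

Lemma continuous_sumR n (G : nat -> R -> R) (x : R) :
  (forall m, continuous (G m) x) -> continuous (fun y => sumR n (fun m => G m y)) x.
Proof.
  intros H. induction n as [|n IH].
  - apply continuous_const.
  - exact (continuous_plus (fun y => sumR n (fun m => G m y)) (G (S n)) x IH (H (S n))).
Qed.

Lemma continuous_pow2 (F : R -> R) (x : R) : continuous F x -> continuous (fun y => F y ^ 2) x.
Proof.
  intros H. apply (continuous_ext (fun y => F y * F y)); [intros; simpl; ring|].
  exact (continuous_mult (K := R_AbsRing) F F x H H).
Qed.

Ltac solve_continuous :=
  repeat match goal with
  | |- continuous (fun _ => ?c) _ => apply continuous_const
  | |- continuous (fun y => y) _ => apply continuous_id
  | |- continuous (fun y => _ + _) _ => apply (continuous_plus (V := R_NormedModule))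
  | |- continuous (fun y => _ - _) _ => apply (continuous_minus (V := R_NormedModule))
  | |- continuous (fun y => _ * _) _ => apply (continuous_mult (K := R_AbsRing))
  | |- continuous (fun y => _ ^ 2) _ => apply continuous_pow2
  | |- continuous (Rmult ?c) _ =>
      apply (continuous_mult (K := R_AbsRing) (fun _ => c) (fun y => y))
  | |- continuous (fun y => clip _) _ => apply (continuous_comp _ clip); [| apply continuous_clip]
  | H : forall x, continuous ?F x |- continuous ?F _ => apply H
  | H : forall x, continuous ?F x |- continuous (fun y => ?F y) _ => apply H
  end.

Lemma continuous_NN h v w theta (x : R) : continuous (NN h v w theta) x.
Proof.
  unfold NN. apply (continuous_plus (V := R_NormedModule)); [apply continuous_const|].
  apply (continuous_sumR h (fun m y => v m * clip (w m * y + theta m))).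
  intros m. solve_continuous.
Qed.

Lemma shift_same theta k t : shift theta k t k = theta k + t.
Proof. unfold shift. now rewrite Nat.eqb_refl. Qed.

Lemma shift_other theta k t m : m <> k -> shift theta k t m = theta m.
Proof. intros H. unfold shift. now rewrite (proj2 (Nat.eqb_neq m k) H). Qed.

Lemma NN_shift h v w theta k t x : (1 <= k <= h)%nat ->
  NN h v w (shift theta k t) x
  = NN h v w theta x + v k * clip_increment (w k * x + theta k) t.
Proof.
  intros Hk. unfold NN. rewrite shift_other by lia.
  rewrite (sumR_update h _ (fun m => v m * clip (w m * x + theta m)) k Hk).
  - rewrite shift_same. unfold clip_increment.
    replace (w k * x + (theta k + t)) with (w k * x + theta k + t) by ring. ring.
  - intros m Hm. now rewrite shift_other.
Qed.

Lemma preactivation_psi w theta k x : w k <> 0 ->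
  w k * x + theta k = w k * (x - psi w theta k).
Proof. intros Hw. unfold psi. field. exact Hw. Qed.

Lemma NN_increment_ge h v w theta k x y :
  (forall m, (1 <= m <= h)%nat -> 0 < v m /\ 0 < w m) -> (1 <= k <= h)%nat ->
  psi w theta k <= x -> x <= y -> y <= psi w theta k + / w k ->
  v k * w k * (y - x) <= NN h v w theta y - NN h v w theta x.
Proof.
  intros Hvw Hk Hx Hxy Hy. destruct (Hvw k Hk) as [Hv Hw].
  assert (Hterm : v k * clip (w k * y + theta k) - v k * clip (w k * x + theta k)
                  = v k * w k * (y - x)).
  { rewrite !preactivation_psi by lra.
    assert (Hy1 : w k * (y - psi w theta k) <= 1).
    { rewrite <- (Rinv_r (w k)) by lra. apply Rmult_le_compat_l; lra. }
    rewrite !clip_unit by nra. ring. }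
  unfold NN. rewrite <- Hterm.
  enough (v k * clip (w k * y + theta k) - v k * clip (w k * x + theta k)
          <= sumR h (fun m => v m * clip (w m * y + theta m))
             - sumR h (fun m => v m * clip (w m * x + theta m))) by lra.
  apply (sumR_sub_ge_term h (fun m => v m * clip (w m * y + theta m))
    (fun m => v m * clip (w m * x + theta m)) k); [|exact Hk].
  intros m Hm. destruct (Hvw m Hm).
  apply Rmult_le_compat_l; [lra|]. apply clip_le_compat. nra.
Qed.

Lemma Lip_lt_increment a b F c x y : Rbar_lt (Lip a b F) (Finite c) ->
  a <= x <= b -> a <= y <= b -> x < y -> F y - F x < c * (y - x).
Proof.
  intros HL Hx Hy Hxy. unfold Lip in HL.
  destruct (Lub_Rbar_correct (fun r => exists x y, a <= x <= b /\ a <= y <= b /\ x <> y /\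
    r = Rabs (F x - F y) / Rabs (x - y))) as [Hub _].
  assert (Hq : Rbar_lt (Rabs (F y - F x) / Rabs (y - x)) c).
  { eapply Rbar_le_lt_trans; [apply Hub | exact HL]. exists y, x. repeat split; lra. }
  simpl in Hq. rewrite (Rabs_pos_eq (y - x)) in Hq by lra.
  apply Rmult_lt_compat_r with (r := y - x) in Hq; [|lra].
  unfold Rdiv in Hq. rewrite Rmult_assoc, Rinv_l, Rmult_1_r in Hq by lra.
  pose proof (Rle_abs (F y - F x)). lra.
Qed.

Definition strictly_increasing_on (g : R -> R) (lo hi : R) : Prop :=
  forall x y, lo <= x -> x < y -> y <= hi -> g x < g y.

Lemma residual_strictly_increasing a b h v w f theta k :
  (forall m, (1 <= m <= h)%nat -> 0 < v m /\ 0 < w m) -> (1 <= k <= h)%nat ->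
  Rbar_lt (Lip a b f) (Finite (v k * w k)) ->
  strictly_increasing_on (fun x => NN h v w theta x - f x)
    (Rmax a (psi w theta k)) (Rmin b (psi w theta k + / w k)).
Proof.
  intros Hvw Hk HL x y Hx Hxy Hy.
  pose proof (Rmax_l a (psi w theta k)). pose proof (Rmax_r a (psi w theta k)).
  pose proof (Rmin_l b (psi w theta k + / w k)). pose proof (Rmin_r b (psi w theta k + / w k)).
  pose proof (Lip_lt_increment a b f _ x y HL ltac:(lra) ltac:(lra) Hxy).
  pose proof (NN_increment_ge h v w theta k x y Hvw Hk ltac:(lra) ltac:(lra) ltac:(lra)).
  lra.
Qed.

Lemma ex_RInt_cont (F : R -> R) lo hi : (forall x, continuous F x) -> ex_RInt F lo hi.
Proof. intros H. apply (ex_RInt_continuous (V := R_CompleteNormedModule)). intros; apply H. Qed.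

Lemma RInt_plus_cont (F G : R -> R) lo hi :
  (forall x, continuous F x) -> (forall x, continuous G x) ->
  RInt (fun x => F x + G x) lo hi = RInt F lo hi + RInt G lo hi.
Proof.
  intros HF HG.
  exact (RInt_plus (V := R_CompleteNormedModule) F G lo hi
    (ex_RInt_cont F lo hi HF) (ex_RInt_cont G lo hi HG)).
Qed.

Lemma RInt_scal_cont c (F : R -> R) lo hi : (forall x, continuous F x) ->
  RInt (fun x => c * F x) lo hi = c * RInt F lo hi.
Proof.
  intros HF.
  exact (RInt_scal (V := R_CompleteNormedModule) F lo hi c (ex_RInt_cont F lo hi HF)).
Qed.

Lemma RInt_Chasles_cont (F : R -> R) lo mid hi : (forall x, continuous F x) ->
  RInt F lo mid + RInt F mid hi = RInt F lo hi.
Proof.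
  intros HF.
  exact (RInt_Chasles (V := R_CompleteNormedModule) F lo mid hi
    (ex_RInt_cont F lo mid HF) (ex_RInt_cont F mid hi HF)).
Qed.

Lemma RInt_eq_0 (F : R -> R) lo hi :
  lo <= hi -> (forall x, lo < x < hi -> F x = 0) -> RInt F lo hi = 0.
Proof.
  intros Hlh HF. rewrite (RInt_ext (V := R_CompleteNormedModule) F (fun _ => 0)).
  - rewrite RInt_const. unfold scal; simpl. unfold mult; simpl. ring.
  - rewrite Rmin_left, Rmax_right by lra. exact HF.
Qed.

Lemma abs_RInt_le_tail (F : R -> R) lo c hi M : (forall x, continuous F x) ->
  lo <= hi -> c <= hi -> 0 <= M ->
  (forall x, lo < x < c -> F x = 0) -> (forall x, lo <= x <= hi -> Rabs (F x) <= M) ->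
  Rabs (RInt F lo hi) <= (hi - c) * M.
Proof.
  intros HF Hlh Hch HM Hzero Hbound.
  destruct (Rle_dec c lo) as [Hcl|Hcl].
  - eapply Rle_trans;
      [apply abs_RInt_le_const; [exact Hlh | apply ex_RInt_cont, HF | exact Hbound]|].
    apply Rmult_le_compat_r; lra.
  - rewrite <- (RInt_Chasles_cont F lo c hi HF), (RInt_eq_0 F lo c) by (auto; lra).
    rewrite Rplus_0_l. apply abs_RInt_le_const; [exact Hch | apply ex_RInt_cont, HF |].
    intros; apply Hbound; lra.
Qed.

Lemma continuous_bounded_on (F : R -> R) lo hi : lo <= hi -> (forall x, continuous F x) ->
  exists M, forall x, lo <= x <= hi -> Rabs (F x) <= M.
Proof.
  intros Hlh HF. destruct (continuity_ab_maj (fun x => Rabs (F x)) lo hi Hlh) as [xm [Hm _]].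
  - intros x _. apply (continuity_pt_comp F Rabs x);
      [apply continuity_pt_filterlim, HF | apply Rcontinuity_abs].
  - exists (Rabs (F xm)). exact Hm.
Qed.

Lemma clip_increment_affine_before w0 alpha t x : 0 < w0 -> 0 <= t ->
  x <= alpha - t / w0 -> clip_increment (w0 * (x - alpha)) t = 0.
Proof.
  intros Hw Ht Hx. unfold clip_increment.
  assert (Hrw : w0 * (x - alpha) + t = w0 * (x - (alpha - t / w0))) by (field; lra).
  assert (w0 * (x - (alpha - t / w0)) <= 0) by nra.
  rewrite Hrw, !clip_nonpos by lra. ring.
Qed.

Lemma clip_increment_affine_inside w0 alpha t x : 0 < w0 -> 0 <= t ->
  alpha <= x <= alpha + / w0 - t / w0 -> clip_increment (w0 * (x - alpha)) t = t.
Proof.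
  intros Hw Ht Hx. unfold clip_increment.
  assert (Hrw : w0 * (x - alpha) + t = w0 * (x - alpha + t / w0)) by (field; lra).
  assert (Hw1 : w0 * (x - alpha + t / w0) <= w0 * / w0) by (apply Rmult_le_compat_l; lra).
  rewrite Rinv_r in Hw1 by lra.
  assert (0 <= w0 * (x - alpha)) by (apply Rmult_le_pos; lra).
  rewrite (clip_unit (w0 * (x - alpha))), (clip_unit (w0 * (x - alpha) + t)) by lra. ring.
Qed.

Lemma clip_increment_affine_after w0 alpha t x : 0 < w0 -> 0 <= t -> alpha + / w0 <= x ->
  clip_increment (w0 * (x - alpha)) t = 0.
Proof.
  intros Hw Ht Hx. unfold clip_increment.
  assert (Hw1 : w0 * / w0 <= w0 * (x - alpha)) by (apply Rmult_le_compat_l; lra).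
  rewrite Rinv_r in Hw1 by lra.
  rewrite !clip_ge1 by lra. ring.
Qed.

Lemma RInt_clip_increment (F : R -> R) a b w0 beta M t :
  0 < w0 -> 0 < t -> (forall x, continuous F x) ->
  (forall x, a <= x <= b -> Rabs (F x) <= M) ->
  Rmax a (- / w0 * beta) <= Rmin b (- / w0 * beta + / w0) ->
  Rabs (RInt (fun x => F x * clip_increment (w0 * x + beta) t) a b
        - t * RInt F (Rmax a (- / w0 * beta)) (Rmin b (- / w0 * beta + / w0)))
  <= 2 * M * t ^ 2 / w0.
Proof.
  intros Hw Ht HF HM Hab.
  set (alpha := - / w0 * beta) in *.
  set (al := Rmax a alpha) in *. set (be := Rmin b (alpha + / w0)) in *.
  (* D = t on (al, be) and D = 0 outside it, up to two strips of width t / w0 *)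
  set (D := fun x => clip_increment (w0 * x + beta) t).
  assert (Hu : forall x, D x = clip_increment (w0 * (x - alpha)) t)
    by (intros; unfold D, alpha; f_equal; field; lra).
  assert (Hal : a <= al /\ alpha <= al /\ (al = a \/ al = alpha))
    by (unfold al, Rmax; destruct Rle_dec; lra).
  assert (Hbe : be <= b /\ be <= alpha + / w0 /\ (be = b \/ be = alpha + / w0))
    by (unfold be, Rmin; destruct Rle_dec; lra).
  assert (Htw : 0 < t / w0) by (apply Rdiv_lt_0_compat; lra).
  assert (HM0 : 0 <= M) by (eapply Rle_trans; [apply Rabs_pos | apply (HM a); lra]).
  assert (HFs : forall x s, a <= x <= b -> Rabs s <= t -> Rabs (F x * s) <= M * t).
  { intros x s Hx Hs. rewrite Rabs_mult.
    apply Rmult_le_compat; [apply Rabs_pos | apply Rabs_pos | apply HM, Hx | exact Hs]. }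
  assert (HD : forall x, Rabs (D x) <= t /\ Rabs (D x - t) <= t).
  { intros x. pose proof (clip_increment_bounds (w0 * x + beta) t ltac:(lra)).
    unfold D. split; unfold Rabs; destruct Rcase_abs; lra. }
  assert (HFD : forall x, continuous (fun y => F y * D y) x)
    by (intros; unfold D, clip_increment; solve_continuous).
  assert (HFDt : forall x, continuous (fun y => F y * (D y - t)) x)
    by (intros; unfold D, clip_increment; solve_continuous).
  assert (Hleft : Rabs (RInt (fun x => F x * D x) a al) <= t / w0 * (M * t)).
  { replace (t / w0) with (al - (al - t / w0)) by ring.
    apply abs_RInt_le_tail; [exact HFD | lra | lra | nra | |].
    - intros x Hx. rewrite Hu, clip_increment_affine_before; [ring | lra | lra |].
      destruct Hal as [_ [_ [Ha|Ha]]]; lra.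
    - intros x Hx. apply HFs; [lra | apply HD]. }
  assert (Hmid : Rabs (RInt (fun x => F x * (D x - t)) al be) <= t / w0 * (M * t)).
  { replace (t / w0) with (be - (be - t / w0)) by ring.
    apply abs_RInt_le_tail; [exact HFDt | lra | lra | nra | |].
    - intros x Hx. rewrite Hu, clip_increment_affine_inside by lra. ring.
    - intros x Hx. apply HFs; [lra | apply HD]. }
  assert (Hright : RInt (fun x => F x * D x) be b = 0).
  { apply RInt_eq_0; [lra|]. intros x Hx.
    rewrite Hu, clip_increment_affine_after; [ring | lra | lra |].
    destruct Hbe as [_ [_ [Hb|Hb]]]; lra. }
  assert (Hsplit : RInt (fun x => F x * D x) a b - t * RInt F al be
    = RInt (fun x => F x * D x) a al + RInt (fun x => F x * (D x - t)) al be).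
  { rewrite <- (RInt_Chasles_cont (fun x => F x * D x) a al b HFD).
    rewrite <- (RInt_Chasles_cont (fun x => F x * D x) al be b HFD), Hright.
    rewrite <- RInt_scal_cont by exact HF.
    replace (RInt (fun x => F x * D x) al be)
      with (RInt (fun x => F x * (D x - t) + t * F x) al be)
      by (apply RInt_ext; intros x _; simpl; ring).
    rewrite RInt_plus_cont by (intros; unfold D, clip_increment; solve_continuous). ring. }
  change (fun x => F x * clip_increment (w0 * x + beta) t) with (fun x => F x * D x).
  rewrite Hsplit.
  eapply Rle_trans; [apply Rabs_triang|].
  replace (2 * M * t ^ 2 / w0) with (t / w0 * (M * t) + t / w0 * (M * t)) by (field; lra).
  lra.
Qed.

Lemma Loss_shift a b h v w (f p : R -> R) theta k t :
  (1 <= k <= h)%nat -> (forall x, continuous f x) -> (forall x, continuous p x) ->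
  Loss a b h v w f p (shift theta k t)
  = Loss a b h v w f p theta
    + 2 * v k * RInt (fun x => (NN h v w theta x - f x) * p x
                               * clip_increment (w k * x + theta k) t) a b
    + v k ^ 2 * RInt (fun x => clip_increment (w k * x + theta k) t ^ 2 * p x) a b.
Proof.
  intros Hk Hf Hp. pose proof (continuous_NN h v w theta) as HN. unfold Loss.
  rewrite <- !RInt_scal_cont, <- !RInt_plus_cont
    by (intros; unfold clip_increment; solve_continuous).
  apply RInt_ext. intros x _. simpl. rewrite NN_shift by exact Hk. ring.
Qed.

Lemma Loss_shift_0 a b h v w (f p : R -> R) theta k : (1 <= k <= h)%nat ->
  Loss a b h v w f p (shift theta k 0) = Loss a b h v w f p theta.
Proof.
  intros Hk. unfold Loss. apply RInt_ext. intros x _. simpl.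
  rewrite NN_shift, clip_increment_0 by exact Hk. ring.
Qed.

Lemma abs_RInt_clip_increment_sqr_le (p : R -> R) a b w0 beta P t :
  a <= b -> 0 <= t -> (forall x, continuous p x) ->
  (forall x, a <= x <= b -> Rabs (p x) <= P) ->
  Rabs (RInt (fun x => clip_increment (w0 * x + beta) t ^ 2 * p x) a b)
  <= (b - a) * (t ^ 2 * P).
Proof.
  intros Hab Ht Hp HP.
  apply abs_RInt_le_const;
    [exact Hab | apply ex_RInt_cont; intros; unfold clip_increment; solve_continuous |].
  intros x Hx. pose proof (clip_increment_bounds (w0 * x + beta) t Ht).
  rewrite Rabs_mult, (Rabs_pos_eq (_ ^ 2)) by apply pow2_ge_0.
  apply Rmult_le_compat; [apply pow2_ge_0 | apply Rabs_pos | apply pow_incr; lra | apply HP, Hx].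
Qed.

Lemma derive_0_of_right_expansion (G : R -> R) c K : is_derive G 0 0 ->
  (forall t, 0 < t -> Rabs (G t - G 0 - c * t) <= K * t ^ 2) -> c = 0.
Proof.
  intros HG Hexp. apply is_derive_Reals in HG.
  assert (Hsmall : forall eps, 0 < eps -> Rabs c < 2 * eps).
  { intros eps Heps. destruct (HG eps Heps) as [delta Hdelta].
    pose proof (cond_pos delta). pose proof (Rabs_pos K).
    set (t := Rmin (delta / 2) (eps / (Rabs K + 1))).
    assert (Ht : 0 < t) by (apply Rmin_pos; [lra | apply Rdiv_lt_0_compat; lra]).
    assert (Htd : Rabs t < delta).
    { rewrite Rabs_pos_eq by lra. assert (t <= delta / 2) by apply Rmin_l. lra. }
    assert (HKt : Rabs K * t <= eps).
    { assert (Hte : t <= eps / (Rabs K + 1)) by apply Rmin_r.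
      apply Rmult_le_compat_l with (r := Rabs K + 1) in Hte; [|lra].
      replace ((Rabs K + 1) * (eps / (Rabs K + 1))) with eps in Hte by (field; lra). lra. }
    specialize (Hdelta t (Rgt_not_eq _ _ Ht) Htd). rewrite Rplus_0_l, Rminus_0_r in Hdelta.
    assert (Hquot : Rabs (G t - G 0) < eps * t).
    { replace (G t - G 0) with ((G t - G 0) / t * t) by (field; lra).
      rewrite Rabs_mult, (Rabs_pos_eq t) by lra. apply Rmult_lt_compat_r; lra. }
    assert (Hct : Rabs c * t <= K * t ^ 2 + Rabs (G t - G 0)).
    { rewrite <- (Rabs_pos_eq t) at 1 by lra. rewrite <- Rabs_mult.
      replace (c * t) with (- (G t - G 0 - c * t) + (G t - G 0)) by ring.
      eapply Rle_trans; [apply Rabs_triang|]. rewrite Rabs_Ropp. specialize (Hexp t Ht). lra. }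
    assert (HK2 : K * t ^ 2 <= eps * t).
    { assert (K * t <= Rabs K * t) by (apply Rmult_le_compat_r; [lra | apply Rle_abs]).
      replace (K * t ^ 2) with (K * t * t) by ring. apply Rmult_le_compat_r; lra. }
    apply Rmult_lt_reg_r with t; lra. }
  destruct (Req_dec c 0) as [Hc|Hc]; [exact Hc|].
  pose proof (Rabs_pos_lt c Hc). pose proof (Hsmall (Rabs c / 4)). lra.
Qed.

Lemma stationary_bias_RInt_eq_0 a b h v w (f p : R -> R) theta k :
  (1 <= k <= h)%nat -> 0 < v k -> 0 < w k ->
  (forall x, continuous f x) -> (forall x, continuous p x) ->
  is_derive (fun t => Loss a b h v w f p (shift theta k t)) 0 0 ->
  Rmax a (psi w theta k) <= Rmin b (psi w theta k + / w k) ->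
  RInt (fun x => (NN h v w theta x - f x) * p x)
    (Rmax a (psi w theta k)) (Rmin b (psi w theta k + / w k)) = 0.
Proof.
  intros Hk Hv Hw Hf Hp Hder Hnonempty.
  pose proof (continuous_NN h v w theta) as HN.
  set (F := fun x => (NN h v w theta x - f x) * p x).
  assert (HF : forall x, continuous F x) by (intros; unfold F; solve_continuous).
  assert (Hab : a <= b).
  { pose proof (Rmax_l a (psi w theta k)). pose proof (Rmin_l b (psi w theta k + / w k)). lra. }
  destruct (continuous_bounded_on F a b Hab HF) as [M HM].
  destruct (continuous_bounded_on p a b Hab Hp) as [P HP].
  set (S := RInt F (Rmax a (psi w theta k)) (Rmin b (psi w theta k + / w k))).
  enough (2 * v k * S = 0) by (apply (Rmult_eq_reg_l (2 * v k)); lra).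
  apply (derive_0_of_right_expansion _ _
    (2 * v k * (2 * M / w k) + v k ^ 2 * ((b - a) * P)) Hder).
  intros t Ht.
  rewrite Loss_shift_0, Loss_shift by assumption.
  pose proof (RInt_clip_increment F a b (w k) (theta k) M t Hw Ht HF HM Hnonempty) as Hlin.
  change (- / w k * theta k) with (psi w theta k) in Hlin. fold S in Hlin.
  unfold F in Hlin. cbv beta in Hlin.
  pose proof (abs_RInt_clip_increment_sqr_le p a b (w k) (theta k) P t Hab ltac:(lra) Hp HP)
    as Hquad.
  set (L := RInt (fun x => (NN h v w theta x - f x) * p x
                           * clip_increment (w k * x + theta k) t) a b) in *.
  set (Q := RInt (fun x => clip_increment (w k * x + theta k) t ^ 2 * p x) a b) in *.
  set (E := L - t * S) in Hlin.
  match goal with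
  | |- Rabs ?X <= _ => replace X with (2 * v k * E + v k ^ 2 * Q) by (unfold E; ring)
  end.
  eapply Rle_trans; [apply Rabs_triang|].
  rewrite (Rabs_mult (2 * v k)), (Rabs_mult (v k ^ 2)).
  rewrite (Rabs_pos_eq (2 * v k)), (Rabs_pos_eq (v k ^ 2)) by (try apply pow2_ge_0; lra).
  assert (2 * v k * Rabs E <= 2 * v k * (2 * M * t ^ 2 / w k)) by (apply Rmult_le_compat_l; lra).
  assert (v k ^ 2 * Rabs Q <= v k ^ 2 * ((b - a) * (t ^ 2 * P)))
    by (apply Rmult_le_compat_l; [apply pow2_ge_0 | exact Hquad]).
  replace ((2 * v k * (2 * M / w k) + v k ^ 2 * ((b - a) * P)) * t ^ 2)
    with (2 * v k * (2 * M * t ^ 2 / w k) + v k ^ 2 * ((b - a) * (t ^ 2 * P))) by (field; lra).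
  lra.
Qed.

Lemma stationary_unit_residual a b h v w (f p : R -> R) theta k :
  (forall m, (1 <= m <= h)%nat -> 0 < v m /\ 0 < w m) -> (1 <= k <= h)%nat ->
  (forall x, continuous f x) -> (forall x, continuous p x) ->
  Rbar_lt (Lip a b f) (Finite (v k * w k)) ->
  is_derive (fun t => Loss a b h v w f p (shift theta k t)) 0 0 ->
  Rmax a (psi w theta k) <= Rmin b (psi w theta k + / w k) ->
  strictly_increasing_on (fun x => NN h v w theta x - f x)
    (Rmax a (psi w theta k)) (Rmin b (psi w theta k + / w k))
  /\ RInt (fun x => (NN h v w theta x - f x) * p x)
       (Rmax a (psi w theta k)) (Rmin b (psi w theta k + / w k)) = 0.
Proof.
  intros Hvw Hk Hf Hp HL Hder Hnonempty. destruct (Hvw k Hk) as [Hv Hw]. split.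
  - exact (residual_strictly_increasing a b h v w f theta k Hvw Hk HL).
  - exact (stationary_bias_RInt_eq_0 a b h v w f p theta k Hk Hv Hw Hf Hp Hder Hnonempty).
Qed.

Lemma RInt_lt_0 (F : R -> R) lo hi : lo < hi -> (forall x, continuous F x) ->
  (forall x, lo < x < hi -> F x < 0) -> RInt F lo hi < 0.
Proof.
  intros Hlh HF Hneg. rewrite <- (RInt_eq_0 (fun _ => 0) lo hi) by (auto; lra).
  apply RInt_lt; [exact Hlh | intros; apply continuous_const | intros; apply HF | exact Hneg].
Qed.

Lemma weighted_RInt_eq_0_sign (g p : R -> R) lo hi : lo < hi ->
  (forall x, continuous g x) -> (forall x, continuous p x) ->
  (forall x, lo < x < hi -> 0 < p x) -> strictly_increasing_on g lo hi ->
  RInt (fun x => g x * p x) lo hi = 0 -> g lo < 0 < g hi.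
Proof.
  intros Hlh Hg Hp Hpos Hinc Hzero.
  assert (Hgp : forall x, continuous (fun y => g y * p y) x) by (intros; solve_continuous).
  split.
  - destruct (Rlt_le_dec (g lo) 0) as [|Hge]; [assumption|]. exfalso.
    enough (0 < RInt (fun x => g x * p x) lo hi) by lra.
    apply RInt_gt_0; [exact Hlh | | intros; apply Hgp].
    intros x Hx. pose proof (Hinc lo x ltac:(lra) ltac:(lra) ltac:(lra)).
    pose proof (Hpos x Hx). nra.
  - destruct (Rlt_le_dec 0 (g hi)) as [|Hle]; [assumption|]. exfalso.
    enough (RInt (fun x => g x * p x) lo hi < 0) by lra.
    apply RInt_lt_0; [exact Hlh | exact Hgp |].
    intros x Hx. pose proof (Hinc x hi ltac:(lra) ltac:(lra) ltac:(lra)).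
    pose proof (Hpos x Hx). nra.
Qed.

Lemma weighted_RInt_eq_0_no_crossing (g p : R -> R) ai bi aj bj :
  ai < aj -> aj < bi -> bi < bj ->
  (forall x, continuous g x) -> (forall x, continuous p x) ->
  (forall x, ai < x < bj -> 0 < p x) ->
  strictly_increasing_on g ai bi -> strictly_increasing_on g aj bj ->
  RInt (fun x => g x * p x) ai bi = 0 -> RInt (fun x => g x * p x) aj bj = 0 -> False.
Proof.
  intros H1 H2 H3 Hg Hp Hpos Hinci Hincj Hzi Hzj.
  assert (Hgp : forall x, continuous (fun y => g y * p y) x) by (intros; solve_continuous).
  destruct (weighted_RInt_eq_0_sign g p ai bi ltac:(lra) Hg Hp
    (fun x Hx => Hpos x ltac:(lra)) Hinci Hzi) as [_ Hgbi].
  destruct (weighted_RInt_eq_0_sign g p aj bj ltac:(lra) Hg Hp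
    (fun x Hx => Hpos x ltac:(lra)) Hincj Hzj) as [Hgaj _].
  assert (Hleft : RInt (fun x => g x * p x) ai aj < 0).
  { apply RInt_lt_0; [exact H1 | exact Hgp |]. intros x Hx.
    pose proof (Hinci x aj ltac:(lra) ltac:(lra) ltac:(lra)). pose proof (Hpos x ltac:(lra)). nra. }
  assert (Hright : 0 < RInt (fun x => g x * p x) bi bj).
  { apply RInt_gt_0; [exact H3 | | intros; apply Hgp]. intros x Hx.
    pose proof (Hincj bi x ltac:(lra) ltac:(lra) ltac:(lra)). pose proof (Hpos x ltac:(lra)). nra. }
  rewrite <- (RInt_Chasles_cont (fun x => g x * p x) ai aj bi Hgp) in Hzi.
  rewrite <- (RInt_Chasles_cont (fun x => g x * p x) aj bi bj Hgp) in Hzj.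
  lra.
Qed.

Lemma overlapping_intervals_nested_or_crossing ai bi aj bj :
  (exists x, ai < x < bi /\ aj < x < bj) ->
  (aj <= ai /\ bi <= bj) \/ (ai <= aj /\ bj <= bi) \/
  (ai < aj /\ aj < bi /\ bi < bj) \/ (aj < ai /\ ai < bj /\ bj < bi).
Proof.
  intros [x Hx]. destruct (Rle_dec aj ai), (Rle_dec bi bj); lra.
Qed.

Lemma Iint_Rmax_Rmin a b w theta k x :
  Iint a b w theta k x <-> Rmax a (psi w theta k) < x < Rmin b (psi w theta k + / w k).
Proof. unfold Iint, Rmax, Rmin. destruct Rle_dec, Rle_dec; lra. Qed.

Theorem lemma2p5 (a b : R) (h : nat) (v w : nat -> R) (f p : R -> R)
  (theta : nat -> R) (i j : nat) :
  a < b ->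
  (forall k, (1 <= k <= h)%nat -> 0 < v k /\ 0 < w k) ->
  (forall x, continuous f x) ->
  (forall x, continuous p x) ->
  (forall x, 0 <= p x) ->
  (forall x, 0 < p x <-> a < x < b) ->
  (forall k, (1 <= k <= h)%nat -> Rbar_lt (Lip a b f) (Finite (v k * w k))) ->
  (* gradient of the loss vanishes at theta: all partial derivatives are 0 *)
  (forall k, (1 <= k <= S h)%nat ->
     is_derive (fun t => Loss a b h v w f p (shift theta k t)) 0 0) ->
  (1 <= i <= h)%nat -> (1 <= j <= h)%nat ->
  (exists x, Iint a b w theta i x /\ Iint a b w theta j x) ->
  (forall x, Iint a b w theta i x -> Iint a b w theta j x) \/
  (forall x, Iint a b w theta j x -> Iint a b w theta i x).
Proof.
  intros _ Hvw Hf Hp _ Hsupp HL Hder Hi Hj [x0 [Hx0i Hx0j]].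
  rewrite Iint_Rmax_Rmin in Hx0i, Hx0j.
  destruct (stationary_unit_residual a b h v w f p theta i Hvw Hi Hf Hp (HL i Hi)
    (Hder i ltac:(lia)) ltac:(lra)) as [Hinci Hzi].
  destruct (stationary_unit_residual a b h v w f p theta j Hvw Hj Hf Hp (HL j Hj)
    (Hder j ltac:(lia)) ltac:(lra)) as [Hincj Hzj].
  pose proof (continuous_NN h v w theta) as HN.
  assert (Hg : forall x, continuous (fun y => NN h v w theta y - f y) x)
    by (intros; solve_continuous).
  assert (Hpos : forall x, a < x < b -> 0 < p x) by (intros; apply Hsupp; assumption).
  pose proof (Rmax_l a (psi w theta i)) as Hai. pose proof (Rmax_l a (psi w theta j)) as Haj.
  pose proof (Rmin_l b (psi w theta i + / w i)) as Hbi.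
  pose proof (Rmin_l b (psi w theta j + / w j)) as Hbj.
  set (ai := Rmax a (psi w theta i)) in *. set (bi := Rmin b (psi w theta i + / w i)) in *.
  set (aj := Rmax a (psi w theta j)) in *. set (bj := Rmin b (psi w theta j + / w j)) in *.
  destruct (overlapping_intervals_nested_or_crossing ai bi aj bj) as [Hn|[Hn|[Hc|Hc]]];
    [exists x0; lra | left | right | exfalso | exfalso].
  - intros x. rewrite !Iint_Rmax_Rmin. fold ai bi aj bj. lra.
  - intros x. rewrite !Iint_Rmax_Rmin. fold ai bi aj bj. lra.
  - destruct Hc as (Hc1 & Hc2 & Hc3).
    exact (weighted_RInt_eq_0_no_crossing _ p ai bi aj bj Hc1 Hc2 Hc3 Hg Hp
      (fun x Hx => Hpos x ltac:(lra)) Hinci Hincj Hzi Hzj).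
  - destruct Hc as (Hc1 & Hc2 & Hc3).
    exact (weighted_RInt_eq_0_no_crossing _ p aj bj ai bi Hc1 Hc2 Hc3 Hg Hp
      (fun x Hx => Hpos x ltac:(lra)) Hincj Hinci Hzj Hzi).
Qed.
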